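(* Every eaco is an existential doctrine.
   Context: A doctrine is a pair $(\mathcal{C},P)$, $\mathcal{C}$ a category with finite products, $P:\mathcal{C}^{op}\to\mathbf{Pos}$ a functor, $f^*=P(f)$; primary: each $P(A)$ has binary meets $\wedge$ preserved by each $f^*$. Elementary: primary and for every $A$ there is $\delta_A\in P(A\times A)$ such that for every $X$ the assignment $\psi\mapsto\langle\pi_1,\pi_2\rangle^*\psi\wedge\langle\pi_2,\pi_3\rangle^*\delta_A$ ($\pi_i$ the projections of $X\times A\times A$) is a left adjoint $P(X\times A)\to P(X\times A\times A)$ to $(id_X\times\Delta_A)^*$. Graph of $f:X\to A$: $\mathcal{G}(f)=(f\times id_A)^*\delta_A\in P(X\times A)$. Stable initial object: initial $0$ with $X\times0\cong0$ for all $X$. AC: for every $A$ not a stable initial object and every $\Gamma$, $\pi_\Gamma^*$ ($\pi_\Gamma:\Gamma\times A\to\Gamma$) has a left adjoint $\Sigma_{\pi_\Gamma}$ and for every $\psi\in P(\Gamma\times A)$ there is a chosen $\epsilon_\psi:\Gamma\to A$ with $\Sigma_{\pi_\Gamma}\psi=\langle id_\Gamma,\epsilon_\psi\rangle^*\psi$ (also used with factors swapped). Co-comprehension: every $P(A)$ has a bottom and for each $\alpha$ there is $\lceil\alpha\rceil:\{\alpha\}^o\to A$ with $\lceil\alpha\rceil^*\alpha=\bot$, universal (unique factorization) among $f$ with $f^*\alpha=\bot$; full if $\lceil\beta\rceil$ factoring through $\lceil\alpha\rceil$ implies $\alpha\le\beta$. An eaco is an elementary doctrine with full co-comprehension satisfying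 AC such that for every $f:X\to A$ and $\alpha\in P(A)$: $f^*\langle\epsilon_{\mathcal{G}(\lceil\alpha\rceil)},id_A\rangle^*\mathcal{G}(\lceil\alpha\rceil)=\langle\epsilon_{\mathcal{G}(\lceil f^*\alpha\rceil)},id_X\rangle^*\mathcal{G}(\lceil f^*\alpha\rceil)$ (with $\epsilon_{\mathcal{G}(\lceil\alpha\rceil)}:A\to\{\alpha\}^o$ the AC witness for the projection $\{\alpha\}^o\times A\to A$). Existential: for every product projection $f$, $f^*$ has a left adjoint $\Sigma_f$ satisfying Beck–Chevalley ($h^*\Sigma_f\gamma=\Sigma_gk^*\gamma$ for every pullback square $h\circ g=f\circ k$) and Frobenius reciprocity $\Sigma_f(\alpha\wedge f^*\beta)=\beta\wedge\Sigma_f\alpha$. *)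

Set Implicit Arguments.
Unset Strict Implicit.

Record Cat := {
  ob :> Type;
  hom : ob -> ob -> Type;
  idm : forall A, hom A A;
  comp : forall A B C, hom B C -> hom A B -> hom A C;
  comp_id_l : forall A B (f : hom A B), comp (idm B) f = f;
  comp_id_r : forall A B (f : hom A B), comp f (idm A) = f;
  comp_assoc : forall A B C D (h : hom C D) (g : hom B C) (f : hom A B),
      comp h (comp g f) = comp (comp h g) f
}.
Arguments hom {c} _ _.
Arguments idm {c} _.
Arguments comp {c A B C} _ _.

Record FPCat := {
  cat :> Cat;
  term : cat;
  bang : forall A : cat, hom A term;
  bang_uniq : forall (A : cat) (f : hom A term), f = bang A;
  prod : cat -> cat -> cat;
  p1 : forall A B : cat, hom (prod A B) A;
  p2 : forall A B : cat, hom (prod A B) B;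
  pair : forall X A B : cat, hom X A -> hom X B -> hom X (prod A B);
  pair_p1 : forall X A B (f : hom X A) (g : hom X B), comp (p1 A B) (pair f g) = f;
  pair_p2 : forall X A B (f : hom X A) (g : hom X B), comp (p2 A B) (pair f g) = g;
  pair_uniq : forall X A B (h : hom X (prod A B)),
      h = pair (comp (p1 A B) h) (comp (p2 A B) h)
}.
Arguments term {f0}.
Arguments prod {f0} _ _.
Arguments p1 {f0 A B}.
Arguments p2 {f0 A B}.
Arguments pair {f0 X A B} _ _.

Definition prodmap (C : FPCat) (A B A' B' : C) (f : hom A A') (g : hom B B')
  : hom (prod A B) (prod A' B') := pair (comp f p1) (comp g p2).

(** initial objects and stable initial objects (X x 0 ≅ 0, i.e. X x 0 initial) *)
Definition is_initial (C : Cat) (I : C) : Prop :=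
  forall X : C, exists f : hom I X, forall g : hom I X, g = f.
Definition stable_initial (C : FPCat) (I : C) : Prop :=
  is_initial I /\ forall X : C, is_initial (prod X I).

(** * Doctrines: functors C^op -> Pos *)
Record Doctrine (C : FPCat) := {
  P : C -> Type;
  leq : forall A, P A -> P A -> Prop;
  leq_refl : forall A (a : P A), leq a a;
  leq_trans : forall A (a b c : P A), leq a b -> leq b c -> leq a c;
  leq_antisym : forall A (a b : P A), leq a b -> leq b a -> a = b;
  rx : forall (A B : C), hom A B -> P B -> P A;          (* f^* *)
  rx_mono : forall A B (f : hom A B) (a b : P B), leq a b -> leq (rx f a) (rx f b);
  rx_id : forall A (a : P A), rx (idm A) a = a;
  rx_comp : forall A B C' (g : hom B C') (f : hom A B) (a : P C'),
      rx (comp g f) a = rx f (rx g a)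
}.
Arguments P {C} d _.
Arguments leq {C d A} _ _.
Arguments rx {C d A B} _ _.

Record Primary (C : FPCat) (D : Doctrine C) := {
  meet : forall A, P D A -> P D A -> P D A;
  meet_glb : forall A (a b c : P D A), leq c (meet a b) <-> (leq c a /\ leq c b);
  meet_rx : forall A B (f : hom A B) (a b : P D B),
      rx f (meet a b) = meet (rx f a) (rx f b)
}.
Arguments meet {C D} p {A} _ _.

(** elementary: X x A x A is bracketed as (X x A) x A; then
    <pi1,pi2> = p1, <pi2,pi3> = <p2 o p1, p2>, id_X x Delta_A = <id, p2>. *)
Record Elementary (C : FPCat) (D : Doctrine C) := {
  el_prim :> Primary D;
  delta : forall A : C, P D (prod A A);
  delta_adj : forall (X A : C) (psi : P D (prod X A)) (phi : P D (prod (prod X A) A)),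
      leq (meet el_prim (rx p1 psi) (rx (pair (comp p2 p1) p2) (delta A))) phi
      <-> leq psi (rx (pair (idm (prod X A)) p2) phi)
}.
Arguments delta {C D} e A.

Definition graph (C : FPCat) (D : Doctrine C) (E : Elementary D) (X A : C)
  (f : hom X A) : P D (prod X A) := rx (prodmap f (idm A)) (delta E A).

(** For A not stable initial: the left adjoint Sigma to pi_Gamma^* exists
    and equals <id, eps_psi>^* psi; stated via the adjunction
    <id,eps_psi>^* psi <= g  <->  psi <= pi_Gamma^* g.
    epsR: projection Gamma x A -> Gamma; epsL: the swapped version A x Gamma -> Gamma. *)
Record AC (C : FPCat) (D : Doctrine C) := {
  epsR : forall (G A : C), ~ stable_initial A -> P D (prod G A) -> hom G A;
  epsR_spec : forall (G A : C) (h : ~ stable_initial A) (psi : P D (prod G A)) (g : P D G),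
      leq (rx (pair (idm G) (epsR h psi)) psi) g <-> leq psi (rx p1 g);
  epsL : forall (A G : C), ~ stable_initial A -> P D (prod A G) -> hom G A;
  epsL_spec : forall (A G : C) (h : ~ stable_initial A) (psi : P D (prod A G)) (g : P D G),
      leq (rx (pair (epsL h psi) (idm G)) psi) g <-> leq psi (rx p2 g)
}.
Arguments epsR {C D} a {G A} _ _.
Arguments epsL {C D} a {A G} _ _.

Record CoComp (C : FPCat) (D : Doctrine C) := {
  bot : forall A, P D A;
  bot_least : forall A (a : P D A), leq (bot A) a;
  co : forall A, P D A -> C;
  ccmap : forall A (a : P D A), hom (co a) A;         (* ceil alpha *)
  cc_bot : forall A (a : P D A), rx (ccmap a) a = bot (co a);
  cc_univ : forall A (a : P D A) (X : C) (f : hom X A), rx f a = bot X ->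
      exists! g : hom X (co a), f = comp (ccmap a) g
}.
Arguments co {C D} c {A} _.
Arguments ccmap {C D} c {A} _.
Arguments bot {C D} c A.

Definition full_cocomp (C : FPCat) (D : Doctrine C) (K : CoComp D) : Prop :=
  forall A (a b : P D A),
    (exists g : hom (co K b) (co K a), ccmap K b = comp (ccmap K a) g) -> leq a b.

Record Eaco (C : FPCat) (D : Doctrine C) := {
  e_el :> Elementary D;
  e_ac : AC D;
  e_cc : CoComp D;
  e_full : full_cocomp e_cc;
  e_cond : forall (X A : C) (f : hom X A) (a : P D A)
      (h1 : ~ stable_initial (co e_cc a)) (h2 : ~ stable_initial (co e_cc (rx f a))),
      rx f (rx (pair (epsL e_ac h1 (graph e_el (ccmap e_cc a))) (idm A))
               (graph e_el (ccmap e_cc a)))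
      = rx (pair (epsL e_ac h2 (graph e_el (ccmap e_cc (rx f a)))) (idm X))
           (graph e_el (ccmap e_cc (rx f a)))
}.

Definition existential (C : FPCat) (D : Doctrine C) (Pr : Primary D) : Prop :=
  exists (SL : forall G A : C, P D (prod G A) -> P D G)
         (SR : forall A G : C, P D (prod A G) -> P D G),
    (forall (G A : C) (psi : P D (prod G A)) (g : P D G),
        leq (SL G A psi) g <-> leq psi (rx p1 g)) /\
    (forall (G A Dl : C) (h : hom Dl G) (psi : P D (prod G A)),
        rx h (SL G A psi) = SL Dl A (rx (prodmap h (idm A)) psi)) /\
    (forall (G A : C) (psi : P D (prod G A)) (b : P D G),
        SL G A (meet Pr psi (rx p1 b)) = meet Pr b (SL G A psi)) /\
    (forall (A G : C) (psi : P D (prod A G)) (g : P D G),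
        leq (SR A G psi) g <-> leq psi (rx p2 g)) /\
    (forall (A G Dl : C) (h : hom Dl G) (psi : P D (prod A G)),
        rx h (SR A G psi) = SR A Dl (rx (prodmap (idm A) h) psi)) /\
    (forall (A G : C) (psi : P D (prod A G)) (b : P D G),
        SR A G (meet Pr psi (rx p2 b)) = meet Pr b (SR A G psi)).

(* When A is not stable initial, AC makes the left adjoint to
   pi^* : P(G) -> P(G x A) substitution along a section <id, eps> of pi,
   and a left adjoint of that form automatically satisfies Beck-Chevalley
   and Frobenius reciprocity.  When A is stable initial, full
   co-comprehension makes P(G x A) trivial, so the left adjoint is bottom
   and Beck-Chevalley amounts to stability of bottoms under reindexing.
   That is where the eaco condition enters: for a = bot the map ceil(bot)
   is split, so the condition says that ceil(h^* bot) o eps is internally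
   the identity, and the Leibniz rule then forces h^* bot <= bot. *)

From Stdlib Require Import Classical ClassicalEpsilon.

Set Implicit Arguments.
Unset Strict Implicit.

Section FiniteProducts.
Variable C : FPCat.

Lemma comp_pair (X Y A B : C) (f : hom X A) (g : hom X B) (k : hom Y X) :
  comp (pair f g) k = pair (comp f k) (comp g k).
Proof.
  rewrite (pair_uniq (comp (pair f g) k)), !comp_assoc, pair_p1, pair_p2.
  reflexivity.
Qed.

Lemma pair_p1_p2 (A B : C) : pair (@p1 C A B) p2 = idm _.
Proof. rewrite (pair_uniq (idm (prod A B))), !comp_id_r. reflexivity. Qed.

Lemma p1_pair_comp (X Y A B : C) (f : hom X A) (g : hom X B) (k : hom Y X) :
  comp p1 (comp (pair f g) k) = comp f k.
Proof. rewrite comp_assoc, pair_p1. reflexivity. Qed.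

Lemma p2_pair_comp (X Y A B : C) (f : hom X A) (g : hom X B) (k : hom Y X) :
  comp p2 (comp (pair f g) k) = comp g k.
Proof. rewrite comp_assoc, pair_p2. reflexivity. Qed.

Lemma initial_of_hom_stable_initial (X I : C) :
  stable_initial I -> hom X I -> is_initial X.
Proof.
  intros [_ HI] f Y. destruct (HI X Y) as [u Hu].
  exists (comp u (pair (idm X) f)). intros g.
  transitivity (comp g (comp p1 (pair (idm X) f))).
  - rewrite pair_p1, comp_id_r. reflexivity.
  - rewrite comp_assoc, (Hu (comp g p1)). reflexivity.
Qed.

End FiniteProducts.

Ltac simpl_hom :=
  unfold prodmap in *;
  repeat rewrite ?pair_p1, ?pair_p2, ?comp_id_l, ?comp_id_r, ?comp_pair,
    ?p1_pair_comp, ?p2_pair_comp, ?pair_p1_p2, <- ?comp_assoc in *.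

Definition is_top (C : FPCat) (D : Doctrine C) (A : C) (a : P D A) : Prop :=
  forall t : P D A, leq t a.

Section Meets.
Variables (C : FPCat) (D : Doctrine C) (Pr : Primary D).

Lemma meet_lb_l (A : C) (a b : P D A) : leq (meet Pr a b) a.
Proof. exact (proj1 (proj1 (meet_glb Pr a b _) (leq_refl _))). Qed.

Lemma meet_lb_r (A : C) (a b : P D A) : leq (meet Pr a b) b.
Proof. exact (proj2 (proj1 (meet_glb Pr a b _) (leq_refl _))). Qed.

Lemma meet_greatest (A : C) (a b c : P D A) :
  leq c a -> leq c b -> leq c (meet Pr a b).
Proof. intros; apply meet_glb; auto. Qed.

Lemma meet_comm (A : C) (a b : P D A) : meet Pr a b = meet Pr b a.
Proof.
  apply leq_antisym; apply meet_greatest; apply meet_lb_l || apply meet_lb_r.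
Qed.

End Meets.

Section Equality.
Variables (C : FPCat) (D : Doctrine C) (El : Elementary D).

Lemma delta_diag_top (X A : C) (u : hom X A) :
  is_top (rx (pair u u) (delta El A)).
Proof.
  intros a.
  set (psi := rx (@p1 C X A) a).
  pose proof (proj1 (delta_adj El psi
    (meet El (rx p1 psi) (rx (pair (comp p2 p1) p2) (delta El A)))) (leq_refl _)) as H.
  rewrite meet_rx in H. subst psi. rewrite <- !rx_comp in H. simpl_hom.
  pose proof (rx_mono (pair (idm X) u) H) as H2.
  rewrite meet_rx, <- !rx_comp in H2. simpl_hom. rewrite rx_id in H2.
  eapply leq_trans; [exact H2 | apply meet_lb_r].
Qed.

Lemma is_top_rx (X G : C) (h : hom X G) (a : P D G) :
  is_top a -> is_top (rx h a).
Proof.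
  intros Ha t. eapply leq_trans; [apply (delta_diag_top h) |].
  replace (pair h h) with (comp (pair (idm G) (idm G)) h) by (simpl_hom; reflexivity).
  rewrite rx_comp. apply rx_mono, Ha.
Qed.

Lemma delta_subst (X A : C) (u v : hom X A) (phi : P D (prod X A)) :
  leq (meet El (rx (pair u v) (delta El A)) (rx (pair (idm X) u) phi))
      (rx (pair (idm X) v) phi).
Proof.
  pose proof (proj2 (delta_adj El phi (rx (pair (comp p1 p1) p2) phi))) as H.
  rewrite <- rx_comp in H. simpl_hom. rewrite rx_id in H.
  specialize (H (leq_refl _)).
  pose proof (rx_mono (pair (pair (idm X) u) v) H) as H2.
  rewrite meet_rx, <- !rx_comp in H2. simpl_hom.
  rewrite meet_comm. exact H2.
Qed.

Lemma delta_top_sym (X A : C) (u v : hom X A) :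
  is_top (rx (pair u v) (delta El A)) -> is_top (rx (pair v u) (delta El A)).
Proof.
  intros H t.
  pose proof (delta_subst u v (rx (pair p2 (comp u p1)) (delta El A))) as L.
  rewrite <- !rx_comp in L. simpl_hom.
  eapply leq_trans; [| exact L].
  apply meet_greatest; [apply H | apply delta_diag_top].
Qed.

Lemma delta_top_leibniz (X A : C) (u v : hom X A) (phi : P D A) :
  is_top (rx (pair u v) (delta El A)) -> leq (rx u phi) (rx v phi).
Proof.
  intros H.
  pose proof (delta_subst u v (rx p2 phi)) as L.
  rewrite <- !rx_comp in L. simpl_hom.
  eapply leq_trans; [| exact L].
  apply meet_greatest; [apply H | apply leq_refl].
Qed.

End Equality.

Section CoComprehension.
Variables (C : FPCat) (D : Doctrine C) (K : CoComp D).

Lemma fibre_trivial_of_hom_stable_initial (Z I : C) :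
  full_cocomp K -> stable_initial I -> hom Z I -> forall a b : P D Z, a = b.
Proof.
  intros Kfull HI f.
  assert (Hle : forall a b : P D Z, leq a b).
  { intros a b. apply Kfull.
    assert (Hb : is_initial (co K b))
      by exact (initial_of_hom_stable_initial HI (comp f (ccmap K b))).
    destruct (Hb (co K a)) as [g _]. exists g.
    destruct (Hb Z) as [f0 Hf0].
    rewrite (Hf0 (ccmap K b)), (Hf0 (comp _ g)). reflexivity. }
  intros a b. apply leq_antisym; apply Hle.
Qed.

Lemma rx_bot_of_retraction (X A : C) (f : hom X A) (g : hom A X) :
  comp g f = idm X -> rx f (bot K A) = bot K X.
Proof.
  intros H. apply leq_antisym; [| apply bot_least].
  eapply leq_trans; [apply rx_mono, (bot_least K (rx g (bot K X))) |].
  rewrite <- rx_comp, H, rx_id. apply leq_refl.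
Qed.

Lemma ccmap_bot_split (G : C) :
  exists k : hom G (co K (bot K G)), comp (ccmap K (bot K G)) k = idm G.
Proof.
  destruct (@cc_univ _ _ K _ (bot K G) G (idm G) (rx_id _)) as [k [Hk _]].
  exists k. auto.
Qed.

End CoComprehension.

Section LeftAdjointBySection.
Variables (C : FPCat) (D : Doctrine C) (Y G : C) (π : hom Y G) (Σ : P D Y -> P D G).
Hypothesis Σ_adj : forall (ψ : P D Y) (g : P D G), leq (Σ ψ) g <-> leq ψ (rx π g).

Lemma sigma_unit (ψ : P D Y) : leq ψ (rx π (Σ ψ)).
Proof. apply Σ_adj, leq_refl. Qed.

Lemma rx_section_le_sigma (s : hom G Y) (ψ : P D Y) :
  comp π s = idm G -> leq (rx s ψ) (Σ ψ).
Proof.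
  intros Hs. eapply leq_trans; [apply rx_mono, sigma_unit |].
  rewrite <- rx_comp, Hs, rx_id. apply leq_refl.
Qed.

Lemma sigma_frobenius (Pr : Primary D) (s : hom G Y) (ψ : P D Y) (b : P D G) :
  comp π s = idm G -> Σ ψ = rx s ψ ->
  Σ (meet Pr ψ (rx π b)) = meet Pr b (Σ ψ).
Proof.
  intros Hs Hsigma. apply leq_antisym.
  - apply Σ_adj. rewrite meet_rx. apply meet_greatest.
    + apply meet_lb_r.
    + eapply leq_trans; [apply meet_lb_l | apply sigma_unit].
  - assert (Hb : b = rx s (rx π b)) by (rewrite <- rx_comp, Hs, rx_id; reflexivity).
    rewrite Hsigma, Hb at 1. rewrite <- meet_rx, meet_comm.
    apply rx_section_le_sigma, Hs.
Qed.

End LeftAdjointBySection.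

(* Beck-Chevalley for a square [π o k = h o π'] that is a pullback at the
   level of sections: [s o h] factors through [k] via a section [s'] of [π']. *)
Lemma sigma_beck_chevalley (C : FPCat) (D : Doctrine C)
  (Y G Y' G' : C) (π : hom Y G) (π' : hom Y' G')
  (Σ : P D Y -> P D G) (Σ' : P D Y' -> P D G')
  (h : hom G' G) (k : hom Y' Y) (s : hom G Y) (s' : hom G' Y') (ψ : P D Y) :
  (forall ψ g, leq (Σ ψ) g <-> leq ψ (rx π g)) ->
  (forall ψ g, leq (Σ' ψ) g <-> leq ψ (rx π' g)) ->
  comp π k = comp h π' -> comp π' s' = idm G' -> comp s h = comp k s' ->
  Σ ψ = rx s ψ -> rx h (Σ ψ) = Σ' (rx k ψ).
Proof.
  intros Hadj Hadj' Hsq Hs' Hfac Hsigma. apply leq_antisym.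
  - rewrite Hsigma, <- rx_comp, Hfac, rx_comp.
    apply (rx_section_le_sigma Hadj'), Hs'.
  - apply Hadj'. rewrite <- rx_comp, <- Hsq, rx_comp.
    apply rx_mono, (sigma_unit Hadj).
Qed.

Section ChoiceWitnesses.
Variables (C : FPCat) (D : Doctrine C) (ac : AC D).

Definition sigmaR (G A : C) (hA : ~ stable_initial A) (ψ : P D (prod G A)) : P D G :=
  rx (pair (idm G) (epsR ac hA ψ)) ψ.

Definition sigmaL (A G : C) (hA : ~ stable_initial A) (ψ : P D (prod A G)) : P D G :=
  rx (pair (epsL ac hA ψ) (idm G)) ψ.

Lemma sigmaR_adjoint (G A : C) (hA : ~ stable_initial A) (ψ : P D (prod G A)) (g : P D G) :
  leq (sigmaR hA ψ) g <-> leq ψ (rx p1 g).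
Proof. apply epsR_spec. Qed.

Lemma sigmaL_adjoint (A G : C) (hA : ~ stable_initial A) (ψ : P D (prod A G)) (g : P D G) :
  leq (sigmaL hA ψ) g <-> leq ψ (rx p2 g).
Proof. apply epsL_spec. Qed.

Lemma sigmaR_beck_chevalley (G A X : C) (hA : ~ stable_initial A) (h : hom X G)
  (ψ : P D (prod G A)) :
  rx h (sigmaR hA ψ) = sigmaR hA (rx (prodmap h (idm A)) ψ).
Proof.
  apply (sigma_beck_chevalley (s := pair (idm G) (epsR ac hA ψ))
           (s' := pair (idm X) (comp (epsR ac hA ψ) h))
           (sigmaR_adjoint hA) (sigmaR_adjoint hA));
    simpl_hom; reflexivity.
Qed.

Lemma sigmaL_beck_chevalley (A G X : C) (hA : ~ stable_initial A) (h : hom X G)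
  (ψ : P D (prod A G)) :
  rx h (sigmaL hA ψ) = sigmaL hA (rx (prodmap (idm A) h) ψ).
Proof.
  apply (sigma_beck_chevalley (s := pair (epsL ac hA ψ) (idm G))
           (s' := pair (comp (epsL ac hA ψ) h) (idm X))
           (sigmaL_adjoint hA) (sigmaL_adjoint hA));
    simpl_hom; reflexivity.
Qed.

Lemma sigmaR_frobenius (Pr : Primary D) (G A : C) (hA : ~ stable_initial A)
  (ψ : P D (prod G A)) (b : P D G) :
  sigmaR hA (meet Pr ψ (rx p1 b)) = meet Pr b (sigmaR hA ψ).
Proof.
  apply (sigma_frobenius (sigmaR_adjoint hA) Pr (s := pair (idm G) (epsR ac hA ψ)));
    [simpl_hom |]; reflexivity.
Qed.

Lemma sigmaL_frobenius (Pr : Primary D) (A G : C) (hA : ~ stable_initial A)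
  (ψ : P D (prod A G)) (b : P D G) :
  sigmaL hA (meet Pr ψ (rx p2 b)) = meet Pr b (sigmaL hA ψ).
Proof.
  apply (sigma_frobenius (sigmaL_adjoint hA) Pr (s := pair (epsL ac hA ψ) (idm G)));
    [simpl_hom |]; reflexivity.
Qed.

Lemma global_point_of_not_stable_initial (K : CoComp D) (A : C) :
  ~ stable_initial A -> inhabited (hom term A).
Proof. intros hA. exact (inhabits (epsR ac (G := term) hA (bot K _))). Qed.

End ChoiceWitnesses.

Section Eaco.
Variables (C : FPCat) (D : Doctrine C) (E : Eaco D).
Local Notation K := (e_cc E).
Local Notation El := (e_el E).

Lemma eaco_fibre_trivial (Z I : C) :
  stable_initial I -> hom Z I -> forall a b : P D Z, a = b.
Proof. apply (fibre_trivial_of_hom_stable_initial (@e_full _ _ E)). Qed.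

Lemma sigmaL_graph_split_top (Y A : C) (hY : ~ stable_initial Y) (c : hom Y A)
  (k : hom A Y) :
  comp c k = idm A -> is_top (sigmaL (e_ac E) hY (graph El c)).
Proof.
  intros Hck t.
  eapply leq_trans;
    [| apply (rx_section_le_sigma (sigmaL_adjoint (e_ac E) hY) (s := pair k (idm A)))];
    [| simpl_hom; reflexivity].
  unfold graph. rewrite <- rx_comp. simpl_hom. rewrite Hck.
  apply delta_diag_top.
Qed.

Lemma fibre_trivial_of_cocomp_rx_bot_stable_initial (X G : C) (h : hom X G) :
  stable_initial (co K (rx h (bot K G))) -> forall a b : P D X, a = b.
Proof.
  intros HS.
  destruct (classic (stable_initial X)) as [HX | HX].
  { exact (eaco_fibre_trivial HX (idm X)). }
  (* A global point [x] of [X] pulls [h^* bot] back to [bot], so it factors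
     through the stable initial [co (h^* bot)], and then so does [X]. *)
  destruct (global_point_of_not_stable_initial (e_ac E) K HX) as [x].
  assert (Hx : rx x (rx h (bot K G)) = bot K term).
  { rewrite <- rx_comp. apply (rx_bot_of_retraction K (g := bang G)).
    rewrite (bang_uniq (comp (bang G) (comp h x))). symmetry; apply bang_uniq. }
  destruct (@cc_univ _ _ K _ (rx h (bot K G)) _ x Hx) as [y _].
  exact (eaco_fibre_trivial HS (comp y (bang X))).
Qed.

Lemma rx_bot_nondegenerate (X G : C) (h : hom X G)
  (h1 : ~ stable_initial (co K (bot K G)))
  (h2 : ~ stable_initial (co K (rx h (bot K G)))) :
  rx h (bot K G) = bot K X.
Proof.
  set (c := ccmap K (rx h (bot K G))).
  set (e := epsL (e_ac E) h2 (graph El c)).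
  (* The eaco condition at [a = bot G], whose [ceil] is split. *)
  assert (Hce : is_top (rx (pair (comp c e) (idm X)) (delta El X))).
  { destruct (ccmap_bot_split K G) as [k Hk].
    pose proof (is_top_rx El h (sigmaL_graph_split_top h1 Hk)) as T.
    unfold sigmaL in T. rewrite (@e_cond _ _ E _ _ h (bot K G) h1 h2) in T.
    fold c e in T. unfold graph in T. rewrite <- rx_comp in T. simpl_hom. exact T. }
  apply leq_antisym; [| apply bot_least].
  eapply leq_trans.
  { rewrite <- (rx_id (rx h (bot K G))) at 1.
    apply (delta_top_leibniz _ (delta_top_sym Hce)). }
  rewrite rx_comp. unfold c. rewrite cc_bot.
  eapply leq_trans; [apply rx_mono, (bot_least K (rx c (bot K X))) |].
  rewrite <- rx_comp. eapply leq_trans; [apply (delta_top_leibniz _ Hce) |].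
  rewrite rx_id. apply leq_refl.
Qed.

Lemma rx_bot (X G : C) (h : hom X G) : rx h (bot K G) = bot K X.
Proof.
  destruct (classic (stable_initial (co K (bot K G)))) as [S1 | N1].
  - destruct (ccmap_bot_split K G) as [k _].
    exact (eaco_fibre_trivial S1 (comp k h) _ _).
  - destruct (classic (stable_initial (co K (rx h (bot K G))))) as [S2 | N2].
    + apply (fibre_trivial_of_cocomp_rx_bot_stable_initial S2).
    + apply rx_bot_nondegenerate; assumption.
Qed.

Definition exR (G A : C) (ψ : P D (prod G A)) : P D G :=
  match excluded_middle_informative (stable_initial A) with
  | left _ => bot K G
  | right hA => sigmaR (e_ac E) hA ψ
  end.

Definition exL (A G : C) (ψ : P D (prod A G)) : P D G :=
  match excluded_middle_informative (stable_initial A) with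
  | left _ => bot K G
  | right hA => sigmaL (e_ac E) hA ψ
  end.

Lemma exR_adjoint (G A : C) (ψ : P D (prod G A)) (g : P D G) :
  leq (exR ψ) g <-> leq ψ (rx p1 g).
Proof.
  unfold exR. destruct (excluded_middle_informative (stable_initial A)) as [S | hA].
  - rewrite (eaco_fibre_trivial S p2 ψ (rx p1 g)).
    split; intros; [apply leq_refl | apply bot_least].
  - apply sigmaR_adjoint.
Qed.

Lemma exL_adjoint (A G : C) (ψ : P D (prod A G)) (g : P D G) :
  leq (exL ψ) g <-> leq ψ (rx p2 g).
Proof.
  unfold exL. destruct (excluded_middle_informative (stable_initial A)) as [S | hA].
  - rewrite (eaco_fibre_trivial S p1 ψ (rx p2 g)).
    split; intros; [apply leq_refl | apply bot_least].
  - apply sigmaL_adjoint.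
Qed.

Lemma exR_beck_chevalley (G A X : C) (h : hom X G) (ψ : P D (prod G A)) :
  rx h (exR ψ) = exR (rx (prodmap h (idm A)) ψ).
Proof.
  unfold exR. destruct (excluded_middle_informative (stable_initial A)).
  - apply rx_bot.
  - apply sigmaR_beck_chevalley.
Qed.

Lemma exL_beck_chevalley (A G X : C) (h : hom X G) (ψ : P D (prod A G)) :
  rx h (exL ψ) = exL (rx (prodmap (idm A) h) ψ).
Proof.
  unfold exL. destruct (excluded_middle_informative (stable_initial A)).
  - apply rx_bot.
  - apply sigmaL_beck_chevalley.
Qed.

Lemma exR_frobenius (G A : C) (ψ : P D (prod G A)) (b : P D G) :
  exR (meet El ψ (rx p1 b)) = meet El b (exR ψ).
Proof.
  unfold exR. destruct (excluded_middle_informative (stable_initial A)).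
  - apply leq_antisym; [apply meet_greatest; apply bot_least | apply meet_lb_r].
  - apply sigmaR_frobenius.
Qed.

Lemma exL_frobenius (A G : C) (ψ : P D (prod A G)) (b : P D G) :
  exL (meet El ψ (rx p2 b)) = meet El b (exL ψ).
Proof.
  unfold exL. destruct (excluded_middle_informative (stable_initial A)).
  - apply leq_antisym; [apply meet_greatest; apply bot_least | apply meet_lb_r].
  - apply sigmaL_frobenius.
Qed.

End Eaco.

Theorem mainTheorem11 (C : FPCat) (D : Doctrine C) (E : Eaco D) :
  existential (el_prim (e_el E)).
Proof.
  exists (exR E), (exL E).
  exact (conj (exR_adjoint E) (conj (exR_beck_chevalley E) (conj (exR_frobenius E)
        (conj (exL_adjoint E) (conj (exL_beck_chevalley E) (exL_frobenius E)))))).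
Qed.
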